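(* Let $f:\mathbb{R}^n\to\mathbb{R}$ be twice continuously differentiable, $m_{2s}$-restricted strongly convex and $M_{2s}$-restricted strongly smooth. Let $\gamma\le m_{2s}$ and $0<\eta\le 1/(4M_{2s})$. Let $\mathbf x^k\in\mathbb{R}^n$ be $s$-sparse, let $T_k\in\mathcal{T}(\mathbf x^k;\eta)$, and let $\mathbf d^k_N$ be the Newton direction at $(\mathbf x^k,T_k)$. Then $$\langle\nabla_{T_k}f(\mathbf x^k),(\mathbf d^k_N)_{T_k}\rangle\le-\gamma\|\mathbf d^k_N\|^2+\frac{1}{4\eta}\|\mathbf x^k_{T_k^c}\|^2.$$
   Context: Notation: $\|\mathbf x\|_0$ = number of nonzero entries; $s$-sparse means $\|\mathbf x\|_0\le s$; $\mathrm{supp}(\mathbf x)$ = indices of nonzero entries; for $T\subseteq\{1,\dots,n\}$, $T^c$ its complement, $\mathbf x_T$ the subvector indexed by $T$, $\nabla_T f(\mathbf x)=(\nabla f(\mathbf x))_T$, $\nabla^2_{T,J}f(\mathbf x)$ the submatrix of the Hessian with rows in $T$ and columns in $J$, $\nabla^2_T f=\nabla^2_{T,T}f$. $\mathcal{P}_s(\mathbf x)=\mathrm{argmin}_{\mathbf z}\{\|\mathbf x-\mathbf z\|:\|\mathbf z\|_0\le s\}$ (a set). $\mathcal{T}(\mathbf x;\eta)=\{T: |T|=s,\ T\supseteq\mathrm{supp}(\mathbf z)\text{ for some }\mathbf z\in\mathcal{P}_s(\mathbf x-\eta\nabla f(\mathbf x))\}$. For $s$-sparse $\mathbf x$ let $M_{2s}(\mathbf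 x)=\sup\{\langle\mathbf y,\nabla^2 f(\mathbf x)\mathbf y\rangle: |\mathrm{supp}(\mathbf x)\cup\mathrm{supp}(\mathbf y)|\le 2s,\ \|\mathbf y\|=1\}$ and $m_{2s}(\mathbf x)$ the corresponding infimum. $f$ is $M_{2s}$-restricted strongly smooth if there is a constant $M_{2s}>0$ with $M_{2s}(\mathbf x)\le M_{2s}$ for all $s$-sparse $\mathbf x$; $f$ is $m_{2s}$-restricted strongly convex if there is a constant $m_{2s}>0$ with $m_{2s}(\mathbf x)\ge m_{2s}$ for all $s$-sparse $\mathbf x$. The Newton direction $\mathbf d_N^k$ at $(\mathbf x^k,T_k)$ is defined by $\nabla^2_{T_k}f(\mathbf x^k)(\mathbf d^k_N)_{T_k}=\nabla^2_{T_k,T_k^c}f(\mathbf x^k)\mathbf x^k_{T_k^c}-\nabla_{T_k}f(\mathbf x^k)$ and $(\mathbf d^k_N)_{T_k^c}=-\mathbf x^k_{T_k^c}$. *)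

From HB Require Import structures.
From mathcomp Require Import all_boot all_order all_algebra.
From mathcomp Require Import all_classical all_reals all_analysis.
Set Implicit Arguments. Unset Strict Implicit. Unset Printing Implicit Defensive.
Import Order.TTheory GRing.Theory Num.Theory.
Import numFieldNormedType.Exports.
Local Open Scope ring_scope.

Section Defs.
Variables (R : realType) (n : nat).
Implicit Types (x y z d : 'rV[R]_n) (A : 'M[R]_n) (T : {set 'I_n}).

Definition supp x : {set 'I_n} := [set i | x 0 i != 0].
Definition sparse (s : nat) x := (#|supp x| <= s)%N.
Definition enorm x : R := Num.sqrt (\sum_i x 0 i ^+ 2).
Definition qform A y : R := \sum_i \sum_j y 0 i * A i j * y 0 j.

(* f (with Hessian map H) is M-restricted strongly smooth: M > 0 and
   M_{2s}(x) <= M for every s-sparse x (sup unfolded). *)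
Definition restricted_strongly_smooth (H : 'rV[R]_n -> 'M[R]_n) (s : nat) (M : R) :=
  0 < M /\ forall x, sparse s x -> forall y,
    (#|supp x :|: supp y| <= 2 * s)%N -> enorm y = 1 -> qform (H x) y <= M.
Definition restricted_strongly_convex (H : 'rV[R]_n -> 'M[R]_n) (s : nat) (m : R) :=
  0 < m /\ forall x, sparse s x -> forall y,
    (#|supp x :|: supp y| <= 2 * s)%N -> enorm y = 1 -> m <= qform (H x) y.

Definition in_Ps (s : nat) x z :=
  sparse s z /\ forall z', sparse s z' -> enorm (x - z) <= enorm (x - z').

Definition in_Tset (g : 'rV[R]_n -> 'rV[R]_n) (s : nat) x (eta : R) T :=
  #|T| = s /\ exists z, in_Ps s (x - eta *: g x) z /\ supp z \subset T.

Definition newton_dir (g : 'rV[R]_n -> 'rV[R]_n) (H : 'rV[R]_n -> 'M[R]_n) x T d :=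
  (forall i, i \in T -> \sum_(j in T) H x i j * d 0 j
                        = \sum_(j in ~: T) H x i j * x 0 j - g x 0 i) /\
  (forall i, i \notin T -> d 0 i = - x 0 i).

End Defs.

(* Split the Newton direction as d = u - v, where u is d_T and v is x_{T^c}, both
   padded with zeros.  The Newton equation turns <grad_T f(x), d_T> into
   -<u, H u> + <u, H v>.  The vector u - v/2 is supported in T and supp x, hence is
   2s-sparse together with x, so restricted strong convexity bounds
   <u, H u> - <u, H v> + <v, H v>/4 from below by m (|u|^2 + |v|^2/4); here the
   cross terms combine because the Hessian of a C^2 function is symmetric
   (Schwarz).  Finally m |v|^2 <= <v, H v> <= M |v|^2 <= |v|^2 / (4 eta). *)

From HB Require Import structures.
From mathcomp Require Import all_boot all_order all_algebra.
From mathcomp Require Import all_classical all_reals all_analysis.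
From mathcomp Require Import ring lra.
Import Order.TTheory GRing.Theory Num.Theory.
Import numFieldNormedType.Exports.
Local Open Scope ring_scope.

Section calculus.
Context {R : realFieldType}.

Lemma is_derive_line {V W : normedModType R} {F : V -> W} (p a : V) (u : R) :
  differentiable F (p + u *: a) ->
  is_derive u 1 (fun t : R => F (p + t *: a)) ('d F (p + u *: a) a).
Proof.
move=> dF.
have E : (fun h : R => h^-1 *: (((fun t => F (p + t *: a)) \o shift u) (h *: 1)
                                 - F (p + u *: a)))
       = (fun h : R => h^-1 *: ((F \o shift (p + u *: a)) (h *: a) - F (p + u *: a))).
  apply/funext => h /=; congr (_ *: (F _ - _)).
  by rewrite /shift /= [h%:A]mulr1 scalerDl addrCA.
split; first by rewrite /derivable E; exact: diff_derivable.
by rewrite /derive E -deriveE.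
Qed.

Lemma normDZ_le {V : normedModType R} (a b : V) {c e s : R} :
  0 <= c <= s -> 0 <= e <= s -> `|c *: a + e *: b| <= s * (`|a| + `|b|).
Proof.
move=> /andP[c0 cs] /andP[e0 es].
rewrite (le_trans (ler_normD _ _)) // !normrZ !ger0_norm // mulrDr.
by rewrite lerD // ler_wpM2r.
Qed.

Lemma eq_of_near_equal {V : normedModType R} {F1 F2 : V -> R} {x : V} :
  {for x, continuous F1} -> {for x, continuous F2} ->
  (forall r, 0 < r -> exists p q, [/\ `|x - p| < r, `|x - q| < r & F1 p = F2 q]) ->
  F1 x = F2 x.
Proof.
move=> cF1 cF2 near_eq; have [//|neq] := eqVneq (F1 x) (F2 x).
have e0 : 0 < `|F1 x - F2 x| / 2 by rewrite divr_gt0 // normr_gt0 subr_eq0.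
have [r /= r0 near_x] := (nbhs_ballP _ _).1
  (filterI ((cvgrPdist_lt _ _).1 cF1 _ e0) ((cvgrPdist_lt _ _).1 cF2 _ e0)).
have [p [q [xp xq Epq]]] := near_eq r r0.
have ball_r y : `|x - y| < r -> ball x r y by rewrite -ball_normE.
have [near1 _] := near_x p (ball_r p xp).
have [_ near2] := near_x q (ball_r q xq).
have : `|F1 x - F2 x| <= `|F1 x - F1 p| + `|F2 x - F2 q|.
  rewrite -Epq -[F1 x - _](subrKA (F1 p)) (le_trans (ler_normD _ _)) //.
  by rewrite [`|F1 p - _|]distrC.
lra.
Qed.

End calculus.

Lemma MVT_from_0 {R : realType} {F dF : R -> R} {s : R} : 0 < s ->
  (forall u : R, is_derive u 1 F (dF u)) ->
  exists2 c, 0 < c < s & F s - F 0 = s * dF c.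
Proof.
move=> s0 DF; have [|c] := @MVT R F dF 0 s s0 (fun u (_ : u \in `]0, s[) => DF u).
  by apply: derivable_within_continuous => u _; exact: ex_derive.
by rewrite in_itv /= subr0 mulrC; exists c.
Qed.

Section bilinear_form.
Context {R : realType} {n : nat}.
Implicit Types (a b c : 'rV[R]_n) (A : 'M[R]_n).

Definition bform A a b : R := \sum_i \sum_j a 0 i * A i j * b 0 j.

Lemma bformBr A a b c : bform A a (b - c) = bform A a b - bform A a c.
Proof.
rewrite /bform -sumrB; apply: eq_bigr => i _.
by rewrite -sumrB; apply: eq_bigr => j _; rewrite !mxE; ring.
Qed.

Lemma qformE A a : qform A a = bform A a a.
Proof. by []. Qed.

Lemma qform_subZ A a b (k : R) : qform A (a - k *: b) =
  qform A a - k * bform A a b - k * bform A b a + k ^+ 2 * qform A b.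
Proof.
rewrite /qform /bform !mulr_sumr -!sumrB -big_split; apply: eq_bigr => i _.
by rewrite !mulr_sumr -!sumrB -big_split; apply: eq_bigr => j _; rewrite !mxE /=; ring.
Qed.

Lemma qformZ A a (k : R) : qform A (k *: a) = k ^+ 2 * qform A a.
Proof.
rewrite /qform mulr_sumr; apply: eq_bigr => i _.
by rewrite mulr_sumr; apply: eq_bigr => j _; rewrite !mxE; ring.
Qed.

Lemma qformr0 A : qform A 0 = 0.
Proof. by rewrite -(scale0r 0) qformZ expr0n mul0r. Qed.

Lemma bform_continuous {H : 'rV[R]_n -> 'M[R]_n} a b :
  continuous H -> continuous (fun y => bform (H y) a b).
Proof.
move=> cH; apply: continuous_big => [|i _]; first exact: add_continuous.
apply: continuous_big => [|j _ y]; first exact: add_continuous.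
apply: (@continuousM _ _ (fun x => a 0 i * H x i j) (fun=> b 0 j));
  last exact: cst_continuous.
apply: (@continuousM _ _ (fun=> a 0 i) (fun x => H x i j)); first exact: cst_continuous.
apply: (@continuous_comp _ _ _ H (fun M => M i j) y (cH y)).
exact: coord_continuous.
Qed.

End bilinear_form.

Section hessian_symmetry.
Context {R : realType} {n : nat} {f : 'rV[R]_n -> R}.
Context {g : 'rV[R]_n -> 'rV[R]_n} {H : 'rV[R]_n -> 'M[R]_n}.
Hypothesis df : forall x, differentiable f x.
Hypothesis dfE : forall x v, 'd f x v = \sum_i g x 0 i * v 0 i.
Hypothesis dg : forall x, differentiable g x.
Hypothesis dgE : forall x v, 'd g x v = (H x *m v^T)^T.

Lemma is_derive_f_line p a (u : R) :
  is_derive u 1 (fun t : R => f (p + t *: a)) (\sum_i g (p + u *: a) 0 i * a 0 i).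
Proof. rewrite -dfE; exact: is_derive_line. Qed.

Lemma is_derive_g_line p a (u : R) i :
  is_derive u 1 (fun t : R => g (p + t *: a) 0 i) (\sum_j H (p + u *: a) i j * a 0 j).
Proof.
have Dg := is_derive_line p a u (dg (p + u *: a)).
have dgu : derivable (fun t : R => g (p + t *: a)) u 1 by apply: ex_derive.
split; first by move/derivable_mxP: dgu; apply.
have := derive_mx dgu; rewrite derive_val dgE => /matrixP /(_ 0 i).
by rewrite !mxE => <-; apply: eq_bigr => j _; rewrite !mxE.
Qed.

Lemma second_difference_mvt x a b {s : R} : 0 < s ->
  exists c e, [/\ 0 < c < s, 0 < e < s &
    f (x + s *: b + s *: a) - f (x + s *: a) - (f (x + s *: b) - f x)
      = s * s * bform (H (x + c *: a + e *: b)) a b].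
Proof.
move=> s0.
have [c cs Ec] := MVT_from_0 s0 (fun u =>
  is_deriveB (is_derive_f_line (x + s *: b) a u) (is_derive_f_line x a u)).
pose psi (w : R) := \sum_i a 0 i * g (x + c *: a + w *: b) 0 i.
have Dpsi (w : R) : is_derive w 1 psi (bform (H (x + c *: a + w *: b)) a b).
  have := is_derive_sum (fun i =>
    is_deriveZ (a 0 i) (is_derive_g_line (x + c *: a) b w i)).
  rewrite fct_sumE => /is_derive_eq; apply; apply: eq_bigr => i _ /=.
  by rewrite scaler_sumr; apply: eq_bigr => j _; exact: mulrA.
have [e es Ee] := MVT_from_0 s0 Dpsi.
exists c, e; split => //.
move: Ec Ee; rewrite /psi !fctE !scale0r !addr0 => ->.
rewrite -mulrA => <-; congr (_ * (_ - _)); apply: eq_bigr => i _.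
  by rewrite mulrC addrAC.
by rewrite mulrC.
Qed.

Hypothesis cH : continuous H.

Lemma hessian_sym x a b : bform (H x) a b = bform (H x) b a.
Proof.
apply: (eq_of_near_equal (bform_continuous a b cH x) (bform_continuous b a cH x)).
move=> r r0; have ab0 : 0 < `|a| + `|b| + 1 by rewrite ltr_wpDl // addr_ge0.
pose s := r / (`|a| + `|b| + 1); have s0 : 0 < s by rewrite divr_gt0.
have near_x c e : 0 < c < s -> 0 < e < s -> `|x - (x + c *: a + e *: b)| < r.
  move=> /andP[c0 cs] /andP[e0 es].
  rewrite -addrA opprD addrA subrr sub0r normrN.
  have cs' : 0 <= c <= s by rewrite !ltW.
  have es' : 0 <= e <= s by rewrite !ltW.
  apply: (le_lt_trans (normDZ_le a b cs' es')).
  by rewrite /s mulrAC ltr_pdivrMr // ltr_pM2l // ltrDl.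
have [c [e [cs es Eab]]] := second_difference_mvt x a b s0.
have [c' [e' [cs' es' Eba]]] := second_difference_mvt x b a s0.
exists (x + c *: a + e *: b), (x + c' *: b + e' *: a); split.
- exact: near_x.
- by rewrite addrAC; exact: near_x.
(* Both sides are the second difference of f over the parallelogram x, s a, s b. *)
apply: (@mulfI _ (s * s)); first by rewrite mulf_neq0 // gt_eqF.
by rewrite -Eab -Eba [x + s *: a + s *: b]addrAC; ring.
Qed.

End hessian_symmetry.

Section euclidean_norm.
Context {R : realType} {n : nat}.
Implicit Types (x y w : 'rV[R]_n) (A : 'M[R]_n).

Lemma enorm_sqr x : enorm x ^+ 2 = \sum_i x 0 i ^+ 2.
Proof. by rewrite /enorm sqr_sqrtr // sumr_ge0 // => i _; exact: sqr_ge0. Qed.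

Lemma enorm0 : enorm (0 : 'rV[R]_n) = 0.
Proof. by rewrite /enorm big1 ?sqrtr0 // => i _; rewrite mxE expr0n. Qed.

Lemma enormZ (k : R) x : enorm (k *: x) = `|k| * enorm x.
Proof.
rewrite /enorm -sqrtr_sqr -sqrtrM ?sqr_ge0 // mulr_sumr.
by congr Num.sqrt; apply: eq_bigr => i _; rewrite mxE exprMn.
Qed.

Lemma enorm_gt0 x : (0 < enorm x) = (x != 0).
Proof.
have [->|x0] := eqVneq x 0; first by rewrite enorm0 ltxx.
rewrite sqrtr_gt0 lt_def sumr_ge0 => [|i _]; last exact: sqr_ge0.
rewrite andbT psumr_eq0 => [|i _]; last exact: sqr_ge0.
apply: contra x0 => /allP x0; apply/eqP/rowP => i; rewrite mxE; apply/eqP.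
by rewrite -sqrf_eq0 (implyP (x0 i (mem_index_enum i))).
Qed.

Lemma supp_scale (k : R) x : k != 0 -> supp (k *: x) = supp x.
Proof. by move=> k0; apply/setP => i; rewrite !inE mxE mulf_eq0 negb_or k0. Qed.

Lemma normalize_row w : w != 0 -> exists y,
  [/\ supp y = supp w, enorm y = 1 & forall A, qform A w = enorm w ^+ 2 * qform A y].
Proof.
move=> w0; have w_gt0 : 0 < enorm w by rewrite enorm_gt0.
exists ((enorm w)^-1 *: w); split.
- by rewrite supp_scale // invr_eq0 gt_eqF.
- by rewrite enormZ ger0_norm ?invr_ge0 ?ltW // mulVf // gt_eqF.
- by move=> A; rewrite qformZ mulrA -exprMn mulfV ?gt_eqF // expr1n mul1r.
Qed.

Lemma restricted_strongly_convex_ge {H s} {m : R} {x w} :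
  restricted_strongly_convex H s m -> sparse s x ->
  (#|supp x :|: supp w| <= 2 * s)%N -> m * enorm w ^+ 2 <= qform (H x) w.
Proof.
move=> [_ Hm] sx; have [-> _|w0] := eqVneq w 0.
  by rewrite enorm0 expr0n /= mulr0 qformr0.
have [y [<- y1 ->]] := normalize_row w w0 => card.
by rewrite mulrC ler_wpM2l ?sqr_ge0 // Hm.
Qed.

Lemma restricted_strongly_smooth_le {H s} {M : R} {x w} :
  restricted_strongly_smooth H s M -> sparse s x ->
  (#|supp x :|: supp w| <= 2 * s)%N -> qform (H x) w <= M * enorm w ^+ 2.
Proof.
move=> [_ HM] sx; have [-> _|w0] := eqVneq w 0.
  by rewrite enorm0 expr0n /= mulr0 qformr0.
have [y [<- y1 ->]] := normalize_row w w0 => card.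
by rewrite [M * _]mulrC ler_wpM2l ?sqr_ge0 // HM.
Qed.

End euclidean_norm.

Section restriction.
Context {R : realType} {n : nat}.
Implicit Types (x a b d w : 'rV[R]_n) (T : {set 'I_n}).

Definition restr T x : 'rV[R]_n := \row_i (if i \in T then x 0 i else 0).

Lemma supp_restr T x : supp (restr T x) = T :&: supp x.
Proof. by apply/setP => i; rewrite !inE mxE; case: (i \in T); rewrite ?eqxx. Qed.

Lemma supp_subZ a b (k : R) : supp (a - k *: b) \subset supp a :|: supp b.
Proof.
apply/fintype.subsetP => i; rewrite !inE !mxE; apply: contraR.
by rewrite negb_or !negbK => /andP[/eqP-> /eqP->]; rewrite mulr0 subr0.
Qed.

Lemma supp_restr_subZ T a x (k : R) :
  supp (restr T a - k *: restr (~: T) x) \subset T :|: supp x.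
Proof.
apply: fintype.subset_trans (supp_subZ _ _ _) _; rewrite !supp_restr finset.subUset.
by rewrite !finset.subIset ?subsetIr ?finset.subsetUl ?finset.subsetUr ?orbT.
Qed.

Lemma card_supp_le {s T x w} : #|T| = s -> sparse s x ->
  supp w \subset T :|: supp x -> (#|supp x :|: supp w| <= 2 * s)%N.
Proof.
move=> cardT sx sw.
apply: (leq_trans (subset_leq_card (_ : _ \subset T :|: supp x))).
  by rewrite finset.subUset finset.subsetUr sw.
by rewrite cardsU cardT (leq_trans (leq_subr _ _)) // mul2n -addnn leq_add2l.
Qed.

Lemma enorm_restr T x : enorm (restr T x) ^+ 2 = \sum_(i in T) x 0 i ^+ 2.
Proof.
rewrite enorm_sqr (bigID (mem T)) /= [X in _ + X]big1 ?addr0 => [|i /negbTE iT].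
  by apply: eq_bigr => i iT; rewrite mxE iT.
by rewrite mxE iT expr0n.
Qed.

Lemma enorm_restr_subZ T a b (k : R) :
  enorm (restr T a - k *: restr (~: T) b) ^+ 2
    = enorm (restr T a) ^+ 2 + k ^+ 2 * enorm (restr (~: T) b) ^+ 2.
Proof.
rewrite !enorm_sqr mulr_sumr -big_split; apply: eq_bigr => i _ /=.
by rewrite !mxE inE; case: (i \in T) => /=; ring.
Qed.

Context {g : 'rV[R]_n -> 'rV[R]_n} {H : 'rV[R]_n -> 'M[R]_n}.

Lemma newton_dir_split {x T d} : newton_dir g H x T d -> d = restr T d - restr (~: T) x.
Proof.
move=> [_ dTc]; apply/rowP => i; rewrite !mxE inE.
by case: ifPn => iT /=; [rewrite subr0 | rewrite sub0r dTc].
Qed.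

Lemma newton_dir_grad {x T d} : newton_dir g H x T d ->
  \sum_(i in T) g x 0 i * d 0 i = - bform (H x) (restr T d) d.
Proof.
move=> [dT dTc].
have gT i : i \in T -> g x 0 i = - \sum_j H x i j * d 0 j.
  move=> iT; rewrite (bigID (mem T)) /= dT //.
  have -> : \sum_(j | j \notin T) H x i j * d 0 j = - \sum_(j in ~: T) H x i j * x 0 j.
    rewrite -sumrN; apply: eq_big => [j|j jT]; first by rewrite inE.
    by rewrite dTc // mulrN.
  ring.
rewrite /bform -sumrN [RHS](bigID (mem T)) /= [X in _ + X]big1 ?addr0 => [|i /negbTE iT].
  apply: eq_bigr => i iT; rewrite gT // mulNr mulr_suml; congr (- _).
  by apply: eq_bigr => j _; rewrite mxE iT; ring.
by rewrite big1 ?oppr0 // => j _; rewrite mxE iT !mul0r.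
Qed.

End restriction.

Theorem lemma5 (R : realType) (n s : nat) (f : 'rV[R]_n -> R)
  (g : 'rV[R]_n -> 'rV[R]_n) (H : 'rV[R]_n -> 'M[R]_n)
  (m M gamma eta : R) (xk dN : 'rV[R]_n) (Tk : {set 'I_n}) :
  (* f is C^2 with gradient g and Hessian H *)
  (forall x, differentiable f x) ->
  (forall x v, 'd f x v = \sum_i g x 0 i * v 0 i) ->
  (forall x, differentiable g x) ->
  (forall x v, 'd g x v = (H x *m v^T)^T) ->
  continuous H ->
  restricted_strongly_convex H s m ->
  restricted_strongly_smooth H s M ->
  gamma <= m -> 0 < eta -> eta <= 1 / (4 * M) ->
  sparse s xk -> in_Tset g s xk eta Tk -> newton_dir g H xk Tk dN ->
  \sum_(i in Tk) g xk 0 i * dN 0 i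
    <= - gamma * enorm dN ^+ 2 + 1 / (4 * eta) * \sum_(i in ~: Tk) xk 0 i ^+ 2.
Proof.
(* Of the choice of Tk only its size matters. *)
move=> df dfE dg dgE cH convex smooth gamma_m eta0 eta_M sx [cardT _] newton.
have M_le : M <= 1 / (4 * eta).
  have [M0 _] := smooth.
  move: eta_M; rewrite !ler_pdivlMr ?mulr_gt0 //; lra.
set u := restr Tk dN; set v := restr (~: Tk) xk.
have supp_v : supp v \subset Tk :|: supp xk.
  by rewrite supp_restr (fintype.subset_trans (subsetIr _ _)) // finset.subsetUr.
have supp_w := supp_restr_subZ Tk dN xk (1 / 2).
have conv_w := restricted_strongly_convex_ge convex sx (card_supp_le cardT sx supp_w).
have conv_v := restricted_strongly_convex_ge convex sx (card_supp_le cardT sx supp_v).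
have smooth_v := restricted_strongly_smooth_le smooth sx (card_supp_le cardT sx supp_v).
rewrite qform_subZ [bform _ v u](hessian_sym df dfE dg dgE cH) in conv_w.
rewrite enorm_restr_subZ -/u -/v in conv_w.
have norm_dN : enorm dN ^+ 2 = enorm u ^+ 2 + enorm v ^+ 2.
  rewrite {1}(newton_dir_split newton) -/u -/v -{1}[v]scale1r.
  by rewrite enorm_restr_subZ expr1n mul1r.
rewrite (newton_dir_grad newton) {2}(newton_dir_split newton) bformBr -qformE.
rewrite norm_dN -enorm_restr.
have gap : 0 <= m - gamma by rewrite subr_ge0.
have := mulr_ge0 gap (sqr_ge0 (enorm u)).
have := mulr_ge0 gap (sqr_ge0 (enorm v)).
have := ler_wpM2r (sqr_ge0 (enorm v)) M_le.
lra.
Qed.
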